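(* Assume $X=\{0,1\}^n$, $R(X)=[0,1]^n$, $Q'$ is monotone submodular on $X$ (viewed as a set function on $2^{[n]}$ via indicator vectors), and its extension $Q:[0,1]^n\to\mathbb{R}$ is component-wise monotonically nondecreasing on $[0,1]^n$. Then for every $\hat{\mathbf{x}}\in[0,1]^n$, the set function $I\mapsto g_{\hat{\mathbf{x}}}^Q(I)$ on $2^{[n]}$ is monotone submodular.
   Context: $Q(\mathbf{x})=Q'(\mathbf{x})$ for $\mathbf{x}\in\{0,1\}^n$. A set function $f:2^{[n]}\to\mathbb{R}$ is monotone submodular if $f(S)\le f(T)$ whenever $S\subseteq T\subseteq[n]$, and $f(S\cup\{j\})+f(S\cup\{k\})\geq f(S\cup\{j,k\})+f(S)$ for all $S\subseteq[n]$ and distinct $j,k\in[n]\setminus S$. A function of binary variables is identified with a set function via $f(A)=f(\chi_A)$, $\chi_A$ the indicator vector of $A$. For $I\subseteq[n]$ and $\chi\in\{0,1\}^I$, $\nu_I^Q(\chi):=\min\{Q(\mathbf{x}):\mathbf{x}\in[0,1]^n,\ \mathbf{x}_I=\chi\}$, where $\mathbf{x}_I$ is the subvector indexed by $I$. The cut violation function is $$g_{\hat{\mathbf{x}}}^Q(I)=\max_{\mu\in\mathbb{R}^I,\eta\in\mathbb{R}}\Big\{\sum_{i\in I}\mu_i\hat{x}_i+\eta:\ \sum_{i\in I}\mu_i\chi_i+\eta\leq \nu_I^Q(\chi)\ \ \forall \chi\in\{0,1\}^I\Big\}.$$ *)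

From mathcomp Require Import all_boot all_order all_algebra.
From mathcomp Require Import classical_sets reals.
Set Implicit Arguments. Unset Strict Implicit. Unset Printing Implicit Defensive.
Import Order.TTheory GRing.Theory Num.Theory.
Local Open Scope ring_scope.
Local Open Scope classical_set_scope.

Section Defs.
Variable R : realType.

Definition monotone_submodular (n : nat) (f : {set 'I_n} -> R) : Prop :=
  (forall S T : {set 'I_n}, S \subset T -> f S <= f T) /\
  (forall (S : {set 'I_n}) (j k : 'I_n), j != k -> j \notin S -> k \notin S ->
     f (j |: S) + f (k |: S) >= f (j |: (k |: S)) + f S).

Definition indic (n : nat) (A : {set 'I_n}) : 'I_n -> R := fun i => (i \in A)%:R.

Definition in_box (n : nat) (x : 'I_n -> R) : Prop := forall i, 0 <= x i <= 1.

Definition compwise_nondecr (n : nat) (Q : ('I_n -> R) -> R) : Prop :=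
  forall (x : 'I_n -> R) (i : 'I_n) (t : R), in_box x -> x i <= t -> t <= 1 ->
    Q x <= Q (fun j => if j == i then t else x j).

(* nu_I^Q(chi) = min { Q x : x in [0,1]^n, x_I = chi }; chi in {0,1}^I is
   represented by a boolean function on 'I_n, only its values on I matter. *)
Definition nu (n : nat) (Q : ('I_n -> R) -> R) (I : {set 'I_n})
    (chi : 'I_n -> bool) : R :=
  inf [set Q x | x in [set x : 'I_n -> R |
         in_box x /\ forall i, i \in I -> x i = (chi i)%:R]].

(* cut violation function g_{xh}^Q(I): optimal value of the LP over
   (mu, eta) in R^I x R (mu represented by a function on 'I_n, only its
   values on I are used). *)
Definition cut_violation (n : nat) (Q : ('I_n -> R) -> R) (xh : 'I_n -> R)
    (I : {set 'I_n}) : R :=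
  sup [set \sum_(i in I) p.1 i * xh i + p.2 | p in
        [set p : ('I_n -> R) * R | forall chi : 'I_n -> bool,
           \sum_(i in I) p.1 i * (chi i)%:R + p.2 <= nu Q I chi]].

End Defs.

From mathcomp Require Import all_boot all_order all_algebra.
From mathcomp Require Import boolp classical_sets reals.
From mathcomp Require Import lra.
(* Re-imported so that the finset names shadow those of classical_sets. *)
From mathcomp Require Import fintype finset.
Import Order.TTheory GRing.Theory Num.Theory.
Set Implicit Arguments. Unset Strict Implicit. Unset Printing Implicit Defensive.
Local Open Scope ring_scope.

(* As Q is monotone on the box and agrees with Q' on its vertices,
   nu_I(chi) = Q'(I :&: supp chi), so g(I) is the value at xh of the convex
   closure of S |-> Q'(S :&: I).  For submodular Q' this is the Lovasz
   extension: sorting the coordinates of xh decreasingly gives a chain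
   set0 = T_0 < ... < T_n = setT and weights lam_k >= 0 summing to 1 with
   xh = sum_k lam_k chi_(T_k).  This decomposition bounds every feasible
   (mu, eta) by sum_k lam_k Q'(T_k :&: I), and Edmonds' greedy vector of
   marginal gains along the chain is feasible by diminishing returns and
   attains that bound.  Hence g(I) = sum_k lam_k Q'(T_k :&: I), a nonnegative
   combination of the monotone submodular functions I |-> Q'(T_k :&: I). *)

Lemma sup_max (R : realType) (E : set R) x : E x -> ubound E x -> sup E = x.
Proof.
move=> Ex ubx; apply/le_anti; rewrite ge_sup //=; last by exists x.
by rewrite (ub_le_sup (ex_intro _ x ubx)).
Qed.

Lemma inf_min (R : realType) (E : set R) x : E x -> lbound E x -> inf E = x.
Proof.
move=> Ex lbx; apply/le_anti; rewrite lb_le_inf //=; last by exists x.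
by rewrite (ge_inf (ex_intro _ x lbx)).
Qed.

Lemma setIU1l (T : finType) (a : T) (A B : {set T}) :
  (a |: A) :&: B = if a \in B then a |: (A :&: B) else A :&: B.
Proof.
apply/setP => x; case: ifP => aB; rewrite !inE;
  by case: (eqVneq x a) => [->|]; rewrite ?aB ?andbF.
Qed.

Lemma sumr_mul_indic (R : ringType) (T : finType) (P C : pred T) (F : T -> R) :
  \sum_(i | P i) F i * (C i)%:R = \sum_(i | P i && C i) F i.
Proof. by rewrite big_mkcondr; apply: eq_bigr => i _; rewrite mulr_natr mulrb. Qed.

Section MonotoneSubmodular.
Variables (R : realType) (n : nat).
Implicit Types (f : {set 'I_n} -> R) (A B S T : {set 'I_n}).

Lemma msubmod_marginal_le f A B x : monotone_submodular f ->
  A \subset B -> x \notin B -> f (x |: B) - f B <= f (x |: A) - f A.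
Proof.
move=> [_ subf]; have [k] := ubnP #|B :\: A|.
elim: k B => // k IH B ltBk AB xB.
have [/eqP|[y]] := set_0Vmem (B :\: A).
  by rewrite setD_eq0 => BA; rewrite (_ : B = A) //; apply/eqP; rewrite eqEsubset BA.
rewrite inE => /andP[yA yB].
have AB' : A \subset B :\ y by rewrite subsetD1 AB.
have xB' : x \notin B :\ y by rewrite inE negb_and xB orbT.
have ltB'k : (#|(B :\ y) :\: A| < k)%N.
  rewrite setDDl setUC -setDDl -ltnS.
  by rewrite (cardsD1 y) !inE yA yB in ltBk.
have xy : x != y by apply: contraNneq xB => ->.
have := subf (B :\ y) x y xy xB'; rewrite setD11 setD1K // => /(_ isT).
have := IH _ ltB'k AB' xB'.
lra.
Qed.

Lemma msubmod_setIl f T : monotone_submodular f ->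
  monotone_submodular (fun S => f (T :&: S)).
Proof.
move=> [monf subf]; split=> [S S' SS'|S j k jk jS kS]; first exact/monf/setIS.
have jTS : j \notin S :&: T by rewrite inE (negbTE jS).
have kTS : k \notin S :&: T by rewrite inE (negbTE kS).
rewrite ![T :&: _]setIC !(setIU1l j) !(setIU1l k).
case: (j \in T); case: (k \in T); [exact: subf | exact: lexx | |];
  by rewrite addrC.
Qed.

Lemma msubmod_conic_sum (J : finType) (c : J -> R) (F : J -> {set 'I_n} -> R) :
  (forall k, 0 <= c k) -> (forall k, monotone_submodular (F k)) ->
  monotone_submodular (fun S => \sum_k c k * F k S).
Proof.
move=> c_ge0 msF; split=> [S T ST|S j k jk jS kS].
  by apply: ler_sum => i _; apply: ler_wpM2l => //; apply: (msF i).1.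
rewrite -!big_split /=; apply: ler_sum => i _; rewrite -!mulrDr.
by apply: ler_wpM2l => //; apply: (msF i).2.
Qed.

End MonotoneSubmodular.

Lemma indic_in_box (R : realType) n (A : {set 'I_n}) : in_box (indic R A).
Proof. by move=> i; rewrite /indic; case: (i \in A); rewrite /= ?lexx ?ler01. Qed.

Section BoxExtension.
Variables (R : realType) (n : nat) (Q : ('I_n -> R) -> R).
Hypothesis monQ : compwise_nondecr Q.

Lemma compwise_nondecr_le (y x : 'I_n -> R) : in_box y -> in_box x ->
  (forall i, y i <= x i) -> Q y <= Q x.
Proof.
have [k] := ubnP #|[set i | y i != x i]|.
elim: k y => // k IH y ltyk boxy boxx yx.
have [/setP y_eq_x|[i]] := set_0Vmem [set i | y i != x i].
  suff -> : y = x by [].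
  by apply/funext => i; have := y_eq_x i; rewrite !inE => /negbFE/eqP.
rewrite inE => yxi.
pose y' j := if j == i then x i else y j.
have boxy' : in_box y' by move=> j; rewrite /y'; case: ifP.
apply: (le_trans (monQ boxy (yx i) _)); first by case/andP: (boxx i).
apply: IH => //; last by move=> j; rewrite /y'; case: (eqVneq j i) => [->|].
have -> : [set j | y' j != x j] = [set j | y j != x j] :\ i.
  by apply/setP => j; rewrite !inE /y'; case: (eqVneq j i) => [->|]; rewrite ?eqxx.
by rewrite (cardsD1 i) inE yxi in ltyk.
Qed.

Variable Q' : {set 'I_n} -> R.
Hypothesis extQ : forall A, Q (indic R A) = Q' A.

Lemma nuE I chi : nu Q I chi = Q' [set i in I | chi i].
Proof.
rewrite /nu -extQ; apply: inf_min.
  exists (indic R [set i in I | chi i]) => //; split; first exact: indic_in_box.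
  by move=> i iI; rewrite /indic inE iI.
move=> _ [x [boxx xI] <-]; apply: compwise_nondecr_le => // [|i].
  exact: indic_in_box.
rewrite /indic inE; case: (boolP (i \in I)) => [iI|_] /=; first by rewrite xI.
by case/andP: (boxx i).
Qed.

End BoxExtension.

Section Chain.
Variables (R : realType) (n : nat) (xh : 'I_n -> R).

Definition desc_order := sort (fun i j => xh j <= xh i) (enum 'I_n).
Definition rank i := index i desc_order.
Definition chain k := [set i | (rank i < k)%N].

(* [level 0 = 1], [level k.+1] is the [k]-th largest coordinate of [xh], and
   [level k = 0] for [k > n]. *)
Definition level k := nth 0 (1 :: map xh desc_order) k.
Definition chain_weight k := level k - level k.+1.

Definition lovasz (h : {set 'I_n} -> R) :=
  \sum_(k < n.+1) chain_weight k * h (chain k).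
Definition greedy (h : {set 'I_n} -> R) i :=
  h (chain (rank i).+1) - h (chain (rank i)).

Lemma perm_desc_order : perm_eq desc_order (enum 'I_n).
Proof. exact/permEl/perm_sort. Qed.

Lemma size_desc_order : size desc_order = n.
Proof. by rewrite (perm_size perm_desc_order) size_enum_ord. Qed.

Lemma mem_desc_order i : i \in desc_order.
Proof. by rewrite (perm_mem perm_desc_order) mem_enum. Qed.

Lemma rank_lt i : (rank i < n)%N.
Proof. by rewrite -[X in (_ < X)%N]size_desc_order index_mem mem_desc_order. Qed.

Lemma rank_nth x0 k : (k < n)%N -> rank (nth x0 desc_order k) = k.
Proof.
move=> ltkn; rewrite /rank index_uniq ?size_desc_order //.
by rewrite (perm_uniq perm_desc_order) enum_uniq.
Qed.

Lemma chain0 : chain 0 = set0.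
Proof. by apply/setP => i; rewrite !inE. Qed.

Lemma chain_n : chain n = setT.
Proof. by apply/setP => i; rewrite !inE rank_lt. Qed.

Lemma rank_notin_chain i : i \notin chain (rank i).
Proof. by rewrite inE ltnn. Qed.

Lemma chain_rankS i : chain (rank i).+1 = i |: chain (rank i).
Proof.
apply/setP => j; rewrite !inE ltnS leq_eqVlt; congr (_ || _).
apply/eqP/eqP => [|->] // /(congr1 (nth j desc_order)).
by rewrite !nth_index ?mem_desc_order.
Qed.

Lemma sum_greedy_chain h k : (k <= n)%N ->
  \sum_(i in chain k) greedy h i = h (chain k) - h set0.
Proof.
elim: k => [|k IH] ltkn; first by rewrite chain0 big_set0 subrr.
set i := nth (Ordinal ltkn) desc_order k.
have rank_i : rank i = k := rank_nth _ ltkn.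
have chainS : chain k.+1 = i |: chain k by rewrite -rank_i chain_rankS.
rewrite chainS big_setU1 /=; last by rewrite -{1}rank_i rank_notin_chain.
by rewrite (IH (ltnW ltkn)) /greedy rank_i chainS addrA subrK.
Qed.

Lemma level_rankS i : level (rank i).+1 = xh i.
Proof.
by rewrite /level /= (nth_map i) ?size_desc_order ?rank_lt // nth_index ?mem_desc_order.
Qed.

Lemma level_out k : (n < k)%N -> level k = 0.
Proof. by move=> ltnk; rewrite /level nth_default //= size_map size_desc_order. Qed.

Lemma sum_chain_weight : \sum_(k < n.+1) chain_weight k = 1.
Proof.
rewrite -(big_mkord xpredT chain_weight).
under eq_bigr do rewrite /chain_weight -opprB.
by rewrite sumrN telescope_sumr // level_out // opprB subr0.
Qed.

Lemma chain_weight_decomp i :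
  xh i = \sum_(k < n.+1) chain_weight k * (i \in chain k)%:R.
Proof.
rewrite -(big_mkord xpredT (fun k => chain_weight k * (i \in chain k)%:R)).
rewrite (big_cat_nat (n := (rank i).+1)) //=; last exact: ltnW (rank_lt i).
rewrite big_nat_cond big1 ?add0r => [|k /andP[/andP[_ ltk] _]]; last first.
  by rewrite inE ltnNge -ltnS ltk mulr0.
rewrite (eq_big_nat _ _ (F2 := fun k => - (level k.+1 - level k))) => [|k /andP[ltk _]].
  rewrite sumrN telescope_sumr; last exact: ltnW (rank_lt i).
  by rewrite level_out // sub0r opprK level_rankS.
by rewrite inE ltk mulr1 opprB.
Qed.

Hypothesis boxxh : in_box xh.

Lemma level_ge0 k : 0 <= level k.
Proof.
have [ltkn|lenk] := ltnP k n.+1; last by rewrite level_out.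
have : level k \in 1 :: map xh desc_order by rewrite mem_nth //= size_map size_desc_order.
by rewrite inE => /predU1P[->|/mapP[i _ ->]] //; case/andP: (boxxh i).
Qed.

Lemma chain_weight_ge0 k : 0 <= chain_weight k.
Proof.
rewrite subr_ge0; have [lenk|ltkn] := leqP n k.
  by rewrite level_out ?ltnS ?level_ge0.
have : sorted >=%R (1 :: map xh desc_order).
  rewrite /= path_sortedE => [|y x z xy yz]; last exact: le_trans yz xy.
  apply/andP; split; first by apply/allP => _ /mapP[i _ ->]; case/andP: (boxxh i).
  by rewrite sorted_map; apply: sort_sorted => i j; rewrite orbC le_total.
by move/sortedP => /(_ 0 k); rewrite /= size_map size_desc_order; apply.
Qed.

End Chain.

Section LovaszExtension.
Variables (R : realType) (n : nat) (xh : 'I_n -> R).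
Implicit Types (f h : {set 'I_n} -> R) (I S : {set 'I_n}).

Lemma sum_greedy_mul h : \sum_i greedy xh h i * xh i = lovasz xh h - h set0.
Proof.
rewrite /lovasz -[h set0]mul1r -(sum_chain_weight xh) mulr_suml -sumrB.
under eq_bigr do rewrite [xh _]chain_weight_decomp mulr_sumr.
rewrite exchange_big /=; apply: eq_bigr => k _.
under eq_bigr do rewrite mulrCA.
by rewrite -mulrBr -mulr_sumr sumr_mul_indic sum_greedy_chain // -ltnS.
Qed.

Lemma affine_le_lovasz h I (m : 'I_n -> R) eta : in_box xh ->
  (forall k, \sum_(i in I) m i * (i \in chain xh k)%:R + eta <= h (chain xh k)) ->
  \sum_(i in I) m i * xh i + eta <= lovasz xh h.
Proof.
move=> boxxh minor; rewrite /lovasz -[eta]mul1r -(sum_chain_weight xh) mulr_suml.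
under eq_bigr do rewrite [xh _]chain_weight_decomp mulr_sumr.
rewrite exchange_big -big_split /=; apply: ler_sum => k _.
under eq_bigr do rewrite mulrCA.
by rewrite -mulr_sumr -mulrDr ler_wpM2l ?chain_weight_ge0 ?minor.
Qed.

Lemma greedy_setI_notin f S i :
  i \notin S -> greedy xh (fun T => f (T :&: S)) i = 0.
Proof. by move=> iS; rewrite /greedy chain_rankS (setIU1l i) (negbTE iS) subrr. Qed.

Lemma sum_greedy_setI f S :
  \sum_(i in S) greedy xh (fun T => f (T :&: S)) i = f S - f set0.
Proof.
have := sum_greedy_chain xh (fun T => f (T :&: S)) (leqnn n).
rewrite chain_n setTI set0I => <-.
rewrite [RHS](big_setID S) /= setTI [X in _ + X]big1 ?addr0 //.
by move=> i; rewrite !inE => /andP[iS _]; apply: greedy_setI_notin.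
Qed.

Lemma greedy_setI_feasible f I S : monotone_submodular f -> S \subset I ->
  \sum_(i in S) greedy xh (fun T => f (T :&: I)) i + f set0 <= f S.
Proof.
move=> msf SI; rewrite -lerBrDr -sum_greedy_setI; apply: ler_sum => i iS.
rewrite /greedy chain_rankS !(setIU1l i) iS (subsetP SI i iS).
apply: msubmod_marginal_le => //; first exact: setIS.
by rewrite inE negb_and rank_notin_chain.
Qed.

End LovaszExtension.

Lemma cut_violationE (R : realType) (n : nat)
    (Q' : {set 'I_n} -> R) (Q : ('I_n -> R) -> R)
    (extQ : forall A, Q (indic R A) = Q' A) (msQ' : monotone_submodular Q')
    (monQ : compwise_nondecr Q) (xh : 'I_n -> R) (boxxh : in_box xh) I :
  cut_violation Q xh I = lovasz xh (fun T => Q' (T :&: I)).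
Proof.
set h := fun T => Q' (T :&: I).
apply: sup_max.
  exists (greedy xh h, Q' set0) => /= [chi|].
    rewrite (nuE monQ extQ) sumr_mul_indic.
    rewrite (eq_bigl (mem [set i in I | chi i])) => [|i]; last by rewrite !inE.
    by apply: greedy_setI_feasible => //; apply/subsetP => i; rewrite inE => /andP[].
  rewrite big_mkcond /= (eq_bigr (fun i => greedy xh h i * xh i)) => [|i _].
    by rewrite sum_greedy_mul /h set0I subrK.
  by case: ifPn => // iI; rewrite greedy_setI_notin // mul0r.
move=> _ [[m eta] /= feas <-]; apply: affine_le_lovasz => // k.
rewrite /h (_ : chain xh k :&: I = [set i in I | i \in chain xh k]).
  by rewrite -(nuE monQ extQ); apply: feas.
by apply/setP => i; rewrite !inE andbC.
Qed.

Theorem proposition2 (R : realType) (n : nat)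
    (Q' : {set 'I_n} -> R) (Q : ('I_n -> R) -> R)
    (hext : forall A : {set 'I_n}, Q (indic R A) = Q' A)
    (hsub : monotone_submodular Q')
    (hmon : compwise_nondecr Q) :
  forall xh : 'I_n -> R, in_box xh ->
    monotone_submodular (fun I : {set 'I_n} => cut_violation Q xh I).
Proof.
move=> xh boxxh.
under [fun I => _]funext => I do rewrite (cut_violationE hext hsub hmon boxxh).
apply: msubmod_conic_sum => k; first exact: chain_weight_ge0.
exact: msubmod_setIl.
Qed.
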